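(* Let $l$ be an even integer with $l\ge6$, and consider all strings $x\in B$ with $|x|=l$ and $\delta(x)=2$. Then: - if $l=4n$ (so $n\ge2$), the maximum of $s([x]_2)$ over these strings is $F_{4n}+F_{2n}^2$, attained at $x=(10)^n0(10)^{n-1}0$; - if $l=4n+2$ (so $n\ge1$), the maximum of $s([x]_2)$ over these strings is $F_{4n+2}+F_{2n}F_{2n+2}$, attained at $x=(10)^n0(10)^n0$.
   Context: Stern's sequence $(a(n))_{n\ge0}$: $a(0)=0$, $a(1)=1$, $a(2n)=a(n)$, $a(2n+1)=a(n)+a(n+1)$; $s(n)=a(n+1)$. For a binary string $x$, $[x]_2$ is the integer it represents in base 2 and $|x|$ its length. $B$ denotes the set of nonempty binary strings that are concatenations of blocks each equal to $10$ or $100$; for $x\in B$, $\delta(x)$ is the number of $0$s minus the number of $1$s in $x$, which equals the number of $100$ blocks. $x^i$ denotes $i$-fold concatenation. $F_n$ are the Fibonacci numbers ($F_0=0,F_1=1,F_n=F_{n-1}+F_{n-2}$). *)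

From mathcomp Require Import all_boot.
From mathcomp Require Import all_algebra.
Set Implicit Arguments. Unset Strict Implicit. Unset Printing Implicit Defensive.

(* Binary strings: seq bool, true = 1, false = 0, most significant bit first. *)

Fixpoint stern_fuel (k n : nat) : nat :=
  match k with
  | 0 => 0
  | k'.+1 =>
      if n == 0 then 0 else if n == 1 then 1 else
      if odd n then stern_fuel k' n./2 + stern_fuel k' (n./2).+1
      else stern_fuel k' n./2
  end.

Definition stern (n : nat) : nat := stern_fuel n.+1 n.

Definition stern_s (n : nat) : nat := stern n.+1.

Definition binval (x : seq bool) : nat := foldl (fun acc (b : bool) => acc.*2 + b) 0 x.

Inductive inB : seq bool -> Prop :=
  | inB10 : inB [:: true; false]
  | inB100 : inB [:: true; false; false]
  | inBcat x y : inB x -> inB y -> inB (x ++ y).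

Definition delta (x : seq bool) : int :=
  (count (fun b : bool => ~~ b) x)%:Z - (count id x)%:Z.

Fixpoint fib (n : nat) : nat :=
  match n with
  | 0 => 0
  | 1 => 1
  | (m.+1 as p).+1 => fib p + fib m
  end.

Definition rep10 (n : nat) : seq bool := flatten (nseq n [:: true; false]).

(* Appending a bit to x acts on the pair (a([x]_2), a([x]_2 + 1)) by
   (u, v) |-> (u + v, v) for a 1 and (u, v) |-> (u, u + v) for a 0, so the block
   (10)^a acts by a matrix with entries F(2a-1), F(2a), F(2a+1).  A word of B with
   delta = 2 is (10)^i 100 (10)^j 100 (10)^k; moving the trailing (10)^k in front of
   the last 0 never decreases s, and s([(10)^a 0 (10)^b 0]_2) = F(2a+2b+2) + F(2a) F(2b+2).
   With a + b + 1 = l/2 fixed, Catalan's identity F(2u) F(2w) + F(w-u)^2 = F(u+w)^2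
   bounds the product by F(l/2)^2, minus 1 when l/2 is odd, and Cassini's identity
   rewrites F(2n+1)^2 - 1 as F(2n) F(2n+2). *)

From mathcomp Require Import all_boot all_algebra zify ring.
Import GRing.Theory.

Lemma stern_fuel_eq k1 k2 n : n < k1 -> n < k2 -> stern_fuel k1 n = stern_fuel k2 n.
Proof.
elim: k1 k2 n => [|k1 IH] [|k2] n //= lt_n_k1 lt_n_k2.
case: eqP => // n_neq0; case: eqP => // n_neq1.
by case: ifP => odd_n; rewrite (IH k2) ?(IH k2 (n./2).+1); lia.
Qed.

Lemma sternE n : 1 < n ->
  stern n = if odd n then stern n./2 + stern (n./2).+1 else stern n./2.
Proof.
move=> lt1n; rewrite [LHS]/stern [stern_fuel _ _]/=.
have [-> ->] : (n == 0) = false /\ (n == 1) = false by lia.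
by case: ifP => odd_n;
  rewrite /stern (stern_fuel_eq n (n./2).+1) ?(stern_fuel_eq n (n./2).+2); lia.
Qed.

Lemma stern_double n : stern n.*2 = stern n.
Proof.
case: n => [//|n]; rewrite sternE ?odd_double ?doubleK //; lia.
Qed.

Lemma stern_doubleS n : stern n.*2.+1 = stern n + stern n.+1.
Proof.
case: n => [//|n]; rewrite sternE /= ?odd_double ?uphalf_double //; lia.
Qed.

Definition stern_step (p : nat * nat) (b : bool) : nat * nat :=
  if b then (p.1 + p.2, p.2) else (p.1, p.1 + p.2).

Lemma stern_pair_binval x :
  (stern (binval x), stern (binval x).+1) = foldl stern_step (0, 1) x.
Proof.
elim/last_ind: x => [//|x b IH].
rewrite /binval !foldl_rcons -/(binval x) -IH /stern_step /=.
case: b => /=.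
- by rewrite addn1 stern_doubleS -doubleS stern_double.
- by rewrite addn0 stern_double stern_doubleS.
Qed.

Lemma stern_s_binval x : stern_s (binval x) = (foldl stern_step (0, 1) x).2.
Proof. by rewrite -stern_pair_binval. Qed.

Lemma fibSS n : fib n.+2 = fib n.+1 + fib n.
Proof. by []. Qed.

Lemma fib_gt0 n : 0 < n -> 0 < fib n.
Proof. by elim: n => [|[|n] IH] // _; rewrite fibSS addn_gt0 IH. Qed.

Lemma fib_addS m n : fib (m + n).+1 = fib m.+1 * fib n.+1 + fib m * fib n.
Proof.
elim: m n => [|m IH] n; first by rewrite mul1n mul0n addn0.
by rewrite addSn -addnS IH !fibSS; lia.
Qed.

Section FibInt.
Local Open Scope ring_scope.
Local Notation F n := ((fib n)%:Z).

Lemma fib_dOcagne n j : F n.+1 * F (n + j) - F n * F (n + j).+1 = (-1) ^+ n * F j.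
Proof.
elim: n => [|n IH]; first by rewrite mul0r subr0 expr0 mul1r.
rewrite addSn exprS mulN1r mulNr -IH !fibSS !PoszD; ring.
Qed.

Lemma fib_vajda n i j :
  F (n + i) * F (n + j) - F n * F (n + i + j) = (-1) ^+ n * F i * F j.
Proof.
pose V i := F (n + i) * F (n + j) - F n * F (n + i + j) = (-1) ^+ n * F i * F j.
suff [] : V i /\ V i.+1 by [].
elim: i => [|i [IH1 IH2]].
  split; rewrite /V ?addn0 ?addn1 ?addSn; first by rewrite mulr0 mul0r subrr.
  by rewrite mulr1 -fib_dOcagne.
split=> //; move: IH1 IH2; rewrite /V !addnS !addSn !fibSS !PoszD => IH1 IH2.
lia.
Qed.
End FibInt.

Lemma fib_catalan_even m k :
  fib (2 * m) * fib (2 * m + k + k) + fib k ^ 2 = fib (2 * m + k) ^ 2.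
Proof.
have := fib_vajda (2 * m) k k; rewrite exprM sqrrN expr1n mul1r.
lia.
Qed.

Lemma fib_cassini_even n : fib (2 * n) * fib (2 * n + 2) + 1 = fib (2 * n + 1) ^ 2.
Proof. by have := fib_catalan_even n 1; rewrite -addnA. Qed.

Lemma fib_mul_even_le u w : fib (2 * u) * fib (2 * w) + odd (u + w) <= fib (u + w) ^ 2.
Proof.
wlog le_uw : u w / u <= w.
  by move=> H; have [/H //|/ltnW/H] := leqP u w; rewrite [w + u]addnC mulnC.
have := fib_catalan_even u (w - u).
have -> : 2 * u + (w - u) + (w - u) = 2 * w by lia.
have -> : 2 * u + (w - u) = u + w by lia.
case: (boolP (odd (u + w))) => [odd_uw | _] <-; last by rewrite addn0 leq_addr.
have lt_uw : u < w.
  by rewrite ltn_neqAle le_uw andbT; apply: contraTneq odd_uw => ->; rewrite addnn odd_double.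
by rewrite leq_add2l expn_gt0 fib_gt0 ?subn_gt0.
Qed.

Lemma rep10D m n : rep10 (m + n) = rep10 m ++ rep10 n.
Proof. by rewrite /rep10 nseqD flatten_cat. Qed.

Lemma rep10Sr n : rep10 n.+1 = rep10 n ++ [:: true; false].
Proof. by rewrite -addn1 rep10D. Qed.

Lemma size_rep10 n : size (rep10 n) = 2 * n.
Proof. by elim: n => [//|n IH]; rewrite /= IH; lia. Qed.

Lemma size_rep10_false_cat a s : size (rep10 a ++ false :: s) = (2 * a + size s).+1.
Proof. by rewrite size_cat size_rep10 addnS. Qed.

(* Stated through p.1 + p.2, since p.1 would need fib (2 * a - 1), wrong at a = 0. *)
Lemma stern_run_rep10 u v a : let p := foldl stern_step (u, v) (rep10 a) in
  p.2 = fib (2 * a) * u + fib (2 * a).+1 * v /\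
  p.1 + p.2 = fib (2 * a).+1 * u + fib (2 * a).+2 * v.
Proof.
elim: a u v => [|a IH] u v p; rewrite {}/p; first by rewrite /=; lia.
rewrite -[foldl _ _ (rep10 a.+1)]/(foldl stern_step (u + v, u + v + v) (rep10 a)).
have [p2 p12] := IH (u + v) (u + v + v); rewrite p12 p2.
have -> : 2 * a.+1 = (2 * a).+2 by lia.
rewrite !fibSS; lia.
Qed.

Lemma stern_run_rep10_mono y a : y.1 <= y.2 ->
  (foldl stern_step y (rep10 a)).1 <= (foldl stern_step y (rep10 a)).2.
Proof. by elim: a y => [//|a IH] [u v] /= le_uv; apply: IH => /=; lia. Qed.

(* The gain is fib (2 * c) * (y.2 - y.1). *)
Lemma stern_run_shift_zero y c : y.1 <= y.2 ->
  (foldl stern_step y (false :: rep10 c)).2 <= (foldl stern_step y (rep10 c ++ [:: false])).2.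
Proof.
case: y => u v /= le_uv; rewrite foldl_cat /=.
have [-> _] := stern_run_rep10 u (u + v) c; have [_ ->] := stern_run_rep10 u v c.
have := leq_mul (leqnn (fib (2 * c))) le_uv; rewrite fibSS; lia.
Qed.

Lemma stern_s_two_zeros a b :
  stern_s (binval (rep10 a ++ false :: rep10 b ++ [:: false])) =
  fib (2 * (a + b).+1) + fib (2 * a) * fib (2 * b.+1).
Proof.
rewrite stern_s_binval; have [p2 p12] := stern_run_rep10 0 1 a.
rewrite foldl_cat; move: (foldl _ _ (rep10 a)) p2 p12 => [p1 q1].
cbn [foldl stern_step fst snd]; rewrite foldl_cat; cbn [foldl stern_step fst snd] => p2 p12.
have [_ ->] := stern_run_rep10 p1 (p1 + q1) b.
have := fib_addS (2 * a) (2 * b).+1.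
have -> : 2 * (a + b).+1 = (2 * a + (2 * b).+1).+1 by lia.
have -> : 2 * b.+1 = (2 * b).+2 by lia.
move: p2 p12; rewrite !fibSS; lia.
Qed.

Definition block (b : bool) : seq bool :=
  if b then [:: true; false; false] else [:: true; false].

Lemma inB_blocksP x : inB x <-> exists2 bs, bs != [::] & x = flatten (map block bs).
Proof.
split.
- elim=> [|| y z _ [bs1 bs1_nil ->] _ [bs2 _ ->]]; [by exists [:: false] | by exists [:: true] |].
  by exists (bs1 ++ bs2); rewrite ?map_cat ?flatten_cat //; case: bs1 bs1_nil.
- have inB_block b : inB (block b) by case: b; constructor.
  case=> [[//|b bs] _ ->]; elim: bs b => [|b' bs IH] b; first by rewrite /= cats0.
  exact: inBcat (inB_block b) (IH b').
Qed.

Lemma delta_blocks bs : delta (flatten (map block bs)) = count id bs.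
Proof.
rewrite /delta; elim: bs => [//|b bs]; rewrite /= !count_cat.
by case: b => /=; lia.
Qed.

Lemma count_id_nseq bs : count id bs = 0 -> bs = nseq (size bs) false.
Proof. by elim: bs => [//|[] bs IH] //= /IH <-. Qed.

Lemma count_id_split bs n : count id bs = n.+1 ->
  exists i bs', bs = nseq i false ++ true :: bs' /\ count id bs' = n.
Proof.
elim: bs => [//|[] bs IH] /=; first by move=> [<-]; exists 0, bs.
by move=> /IH [i [bs' [-> count_bs']]]; exists i.+1, bs'.
Qed.

Lemma blocks_nseq_false k : flatten (map block (nseq k false)) = rep10 k.
Proof. by rewrite map_nseq. Qed.

Lemma blocks_nseq_true i bs :
  flatten (map block (nseq i false ++ true :: bs)) = rep10 i.+1 ++ false :: flatten (map block bs).
Proof. by rewrite map_cat flatten_cat map_nseq rep10Sr -catA. Qed.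

Lemma inB_delta2P x : inB x /\ delta x = 2 <->
  exists i j k, x = rep10 i.+1 ++ false :: rep10 j.+1 ++ false :: rep10 k.
Proof.
split.
- case=> /inB_blocksP [bs _ ->]; rewrite delta_blocks => -[/count_id_split[i [bs1 [-> ]]]].
  move=> /count_id_split[j [bs2 [-> /count_id_nseq ->]]].
  by exists i, j, (size bs2); rewrite !blocks_nseq_true blocks_nseq_false.
- case=> i [j [k ->]].
  rewrite -[rep10 k]blocks_nseq_false -!blocks_nseq_true; split.
    by apply/inB_blocksP; eexists; last reflexivity; case: i.
  by rewrite delta_blocks count_cat /= count_cat /= !count_nseq.
Qed.

Lemma inB_delta2_two_zeros a b :
  let x := rep10 a.+1 ++ false :: rep10 b.+1 ++ [:: false] in
  [/\ inB x, delta x = 2 & size x = 2 * (a + b) + 6].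
Proof.
move=> x; have [Bx dx] : inB x /\ delta x = 2 by apply/inB_delta2P; exists a, b, 0.
by split=> //; rewrite /x !size_rep10_false_cat /=; lia.
Qed.

Lemma stern_s_delta2_shift i j k :
  stern_s (binval (rep10 i.+1 ++ false :: rep10 j.+1 ++ false :: rep10 k)) <=
  stern_s (binval (rep10 i.+1 ++ false :: rep10 (j.+1 + k) ++ [:: false])).
Proof.
set pre := rep10 i.+1 ++ false :: rep10 j.+1.
have -> : rep10 i.+1 ++ false :: rep10 j.+1 ++ false :: rep10 k = pre ++ false :: rep10 k.
  by rewrite /pre -catA.
have -> : rep10 i.+1 ++ false :: rep10 (j.+1 + k) ++ [:: false] = pre ++ rep10 k ++ [:: false].
  by rewrite /pre rep10D -catA /= -catA.
rewrite !stern_s_binval !(foldl_cat _ _ pre).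
apply: stern_run_shift_zero; rewrite /pre foldl_cat; cbn [foldl stern_step].
by apply: stern_run_rep10_mono; apply: leq_addr.
Qed.

Lemma stern_s_delta2_le x m : inB x -> delta x = 2 -> size x = 2 * m ->
  stern_s (binval x) + odd m <= fib (2 * m) + fib m ^ 2.
Proof.
move=> Bx dx; have [i [j [k ->]]] := proj1 (inB_delta2P x) (conj Bx dx).
rewrite !size_rep10_false_cat size_rep10 => size_x.
have := stern_s_delta2_shift i j k; rewrite stern_s_two_zeros.
have := fib_mul_even_le i.+1 (j.+1 + k).+1.
have -> : i.+1 + (j.+1 + k).+1 = m by lia.
have -> : 2 * (i.+1 + (j.+1 + k)).+1 = 2 * m by lia.
lia.
Qed.

Theorem mainTheorem9 (l : nat) :
  ~~ odd l -> 6 <= l ->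
  (forall n : nat, l = 4 * n ->
     let x0 := rep10 n ++ [:: false] ++ rep10 n.-1 ++ [:: false] in
     [/\ inB x0, size x0 = l, delta x0 = Posz 2,
         stern_s (binval x0) = fib (4 * n) + fib (2 * n) ^ 2 &
         forall x : seq bool, inB x -> size x = l -> delta x = Posz 2 ->
           stern_s (binval x) <= fib (4 * n) + fib (2 * n) ^ 2])
  /\
  (forall n : nat, l = 4 * n + 2 ->
     let x0 := rep10 n ++ [:: false] ++ rep10 n ++ [:: false] in
     [/\ inB x0, size x0 = l, delta x0 = Posz 2,
         stern_s (binval x0) = fib (4 * n + 2) + fib (2 * n) * fib (2 * n + 2) &
         forall x : seq bool, inB x -> size x = l -> delta x = Posz 2 ->
           stern_s (binval x) <= fib (4 * n + 2) + fib (2 * n) * fib (2 * n + 2)]).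
Proof.
move=> _ l_ge6; split=> n l_eq; subst l.
- case: n l_ge6 => [|[|p]] // _ x0; rewrite {}/x0 !cat1s succnK.
  have [Bx0 dx0 size_x0] := inB_delta2_two_zeros p.+1 p.
  split=> //.
  + by rewrite size_x0; lia.
  + by rewrite stern_s_two_zeros -mulnn; congr (fib _ + fib _ * fib _); lia.
  + move=> x Bx size_x dx; have := stern_s_delta2_le x (2 * p.+2) Bx dx.
    rewrite size_x (_ : 2 * (2 * p.+2) = 4 * p.+2); last by lia.
    by move=> /(_ erefl); lia.
- case: n l_ge6 => [//|p] _ x0; rewrite {}/x0 !cat1s.
  have [Bx0 dx0 size_x0] := inB_delta2_two_zeros p p.
  split=> //.
  + by rewrite size_x0; lia.
  + by rewrite stern_s_two_zeros; congr (fib _ + fib _ * fib _); lia.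
  + move=> x Bx size_x dx; have := stern_s_delta2_le x (2 * p.+1 + 1) Bx dx.
    rewrite size_x (_ : 2 * (2 * p.+1 + 1) = 4 * p.+1 + 2); last by lia.
    have -> : odd (2 * p.+1 + 1) by rewrite addn1 oddS oddM.
    by move=> /(_ erefl); have := fib_cassini_even p.+1; lia.
Qed.
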